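(* Let $A,B\in\mathbb{C}^{n\times n}$ be Hermitian positive semidefinite matrices. For any integers $k,h\ge1$ with $kh+1\le n$, \[ \lambda_{kh+1}(A\circ B)\le\lambda_1(B)\,\mathrm{Tr}(A_{>k})+\lambda_1(A)\,\mathrm{Tr}(B_{>h})+\mathrm{Tr}(A_{>k})\,\mathrm{Tr}(B_{>h}), \] where $\mathrm{Tr}(M_{>r}):=\sum_{j=r+1}^{n}\lambda_j(M)$.
   Context: For a Hermitian matrix $M$, $\lambda_1(M)\ge\lambda_2(M)\ge\dots\ge\lambda_n(M)$ denote its eigenvalues in decreasing order. $A\circ B$ denotes the entrywise (Hadamard) product. *)

(* complex matrices over R[i] for R : realType (R[i] = C when R = the reals). *)
From HB Require Import structures.
From mathcomp Require Import all_boot all_order all_algebra.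
From mathcomp Require Import complex reals.
Set Implicit Arguments. Unset Strict Implicit. Unset Printing Implicit Defensive.
Import Order.TTheory GRing.Theory Num.Theory.
Local Open Scope ring_scope.

Section Spectral.
Variable R : realType.
Local Notation C := (R[i]).

Definition hermitian (n : nat) (A : 'M[C]_n) : Prop :=
  (map_mx Num.conj A)^T = A.

Definition psd (n : nat) (A : 'M[C]_n) : Prop :=
  hermitian A /\
  forall v : 'cV[C]_n, 0 <= ((map_mx Num.conj v)^T *m A *m v) 0 0.

Definition hadamard (n : nat) (A B : 'M[C]_n) : 'M[C]_n :=
  \matrix_(i, j) (A i j * B i j).

(* The eigenvalues of A with algebraic multiplicity: the roots of the
   (monic) characteristic polynomial, which splits over the closed field C. *)
Definition eigs (n : nat) (A : 'M[C]_n) : seq C :=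
  sval (closed_field_poly_normal (char_poly A)).

(* Eigenvalues (real parts; they are real for Hermitian A) in decreasing order. *)
Definition eigs_desc (n : nat) (A : 'M[C]_n) : seq R :=
  sort (fun x y : R => y <= x) [seq complex.Re z | z <- eigs A].

(* lambda A j = lambda_j(A), 1-indexed: lambda A 1 >= lambda A 2 >= ... *)
Definition lambda (n : nat) (A : 'M[C]_n) (j : nat) : R :=
  nth 0 (eigs_desc A) j.-1.

Definition trace_gt (n : nat) (A : 'M[C]_n) (r : nat) : R :=
  \sum_(r.+1 <= j < n.+1) lambda A j.

End Spectral.

From HB Require Import structures.
From mathcomp Require Import all_boot all_order all_algebra.
From mathcomp Require Import complex reals.
From mathcomp Require Import ring zify fingroup perm.
Import Order.TTheory GRing.Theory Num.Theory.
Local Open Scope ring_scope.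

Set Implicit Arguments. Unset Strict Implicit. Unset Printing Implicit Defensive.

(* Diagonalize A = P^* diag(a) P, B = Q^* diag(b) Q and A o B = U^* diag(mu) U.
   Then v^* (A o B) v = sum_(i,j) a_i b_j |c_ij|^2 with c_ij = sum_q P_iq Q_jq v_q.
   Since kh + (n - kh - 1) < n, some v != 0 kills the kh vectors (P_iq Q_jq)_q
   for i, j among the indices of the k (resp. h) largest eigenvalues of A (resp. B),
   and lies in the span of the kh + 1 leading eigenvectors of A o B.  For this v
   the left side is at least lambda_(kh+1)(A o B) |v|^2, while on the right only
   pairs with i or j outside the leading indices survive; Bessel's inequality
   bounds every row and column sum of |c_ij|^2 by |v|^2, and bounding a_i, b_j by
   lambda_1 on the leading indices gives the three terms of the bound. *)

Local Notation ct X := ((map_mx Num.conj X)^T).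

Section OrthogonalVector.
Variables (F : fieldType) (n : nat).

Lemma mulmx_ker_nonzero p (G : 'M[F]_(p, n)) : (p < n)%N ->
  exists2 v : 'cV[F]_n, v != 0 & G *m v = 0.
Proof.
move=> ltpn.
have rank_gt0 : (0 < \rank (kermx G^T))%N.
  rewrite mxrank_ker subn_gt0; apply: leq_ltn_trans ltpn; exact: rank_leq_col.
have ker_neq0 : kermx G^T != 0 by rewrite -mxrank_eq0 -lt0n.
have [i row_neq0] : exists i, row i (kermx G^T) != 0.
  apply/existsP; apply: contraNT ker_neq0 => /existsPn rows_eq0.
  apply/eqP/row_matrixP => i; rewrite row0; exact/eqP/negbNE/rows_eq0.
exists (row i (kermx G^T))^T; first by rewrite trmx_eq0.
have /sub_kermxP rowG := row_sub i (kermx G^T).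
by rewrite -[G]trmxK -trmx_mul trmxK rowG trmx0.
Qed.

Lemma exists_nonzero_orthogonal (I : finType) (f : I -> 'I_n -> F) (S : {set I}) :
  (#|S| < n)%N ->
  exists2 v : 'cV[F]_n, v != 0 & forall i, i \in S -> \sum_q f i q * v q 0 = 0.
Proof.
move=> ltSn.
have [v vnz Gv] := mulmx_ker_nonzero
  (\matrix_(r, q) f (enum_val r) q : 'M_(#|S|, n)) ltSn.
exists v => // i iS; have /matrixP/(_ (enum_rank_in iS i) 0) := Gv.
by rewrite !mxE; under eq_bigr do rewrite mxE enum_rankK_in //.
Qed.

End OrthogonalVector.

Section WeightedSums.
Variable R : numDomainType.

Lemma psumr_sub_le (I : finType) (P : pred I) (F : I -> R) :
  (forall i, 0 <= F i) -> \sum_(i | P i) F i <= \sum_i F i.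
Proof.
move=> F0; rewrite [X in _ <= X](bigID P) /= lerDl.
by apply: sumr_ge0 => i _; apply: F0.
Qed.

Variables (I J : finType) (a : I -> R) (b : J -> R) (e : I -> J -> R).
Variables (SA : {set I}) (SB : {set J}) (LA LB N : R).
Hypotheses (a_ge0 : forall i, 0 <= a i) (b_ge0 : forall j, 0 <= b j).
Hypotheses (LA_ge0 : 0 <= LA) (LB_ge0 : 0 <= LB).
Hypotheses (a_le : forall i, a i <= LA) (b_le : forall j, b j <= LB).
Hypotheses (e_ge0 : forall i j, 0 <= e i j).
Hypothesis e_eq0 : forall i j, i \in SA -> j \in SB -> e i j = 0.
Hypotheses (col_le : forall j, \sum_i e i j <= N) (row_le : forall i, \sum_j e i j <= N).

Lemma weighted_sum_bound :
  \sum_i \sum_j a i * b j * e i j <=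
  (LB * \sum_(i | i \notin SA) a i + LA * \sum_(j | j \notin SB) b j
   + (\sum_(i | i \notin SA) a i) * (\sum_(j | j \notin SB) b j)) * N.
Proof.
have e_le i j : e i j <= N.
  by apply: le_trans (col_le j); rewrite (bigD1 i) //= lerDl sumr_ge0.
have inSA : \sum_(i in SA) \sum_j a i * b j * e i j
    <= LA * (\sum_(j | j \notin SB) b j) * N.
  apply: (@le_trans _ _ (\sum_(i in SA) \sum_(j | j \notin SB) LA * b j * e i j)).
    apply: ler_sum => i iSA; rewrite (bigID (mem SB)) /= big1 ?add0r.
      apply: ler_sum => j _; apply: ler_wpM2r => //.
      exact: ler_wpM2r.
    by move=> j jSB; rewrite e_eq0 // mulr0.
  rewrite exchange_big /= [LA * _]mulr_sumr mulr_suml; apply: ler_sum => j _.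
  rewrite -mulr_sumr; apply: ler_wpM2l; first exact: mulr_ge0.
  by apply: le_trans (col_le j); exact: psumr_sub_le.
have notinSA : \sum_(i | i \notin SA) \sum_j a i * b j * e i j
    <= (\sum_(i | i \notin SA) a i) * (LB + \sum_(j | j \notin SB) b j) * N.
  rewrite mulr_suml mulr_suml; apply: ler_sum => i _.
  rewrite (bigID (mem SB)) /= mulrDr mulrDl; apply: lerD.
    apply: (@le_trans _ _ (\sum_(j in SB) a i * LB * e i j)).
      apply: ler_sum => j _; apply: ler_wpM2r => //.
      exact: ler_wpM2l.
    rewrite -mulr_sumr; apply: ler_wpM2l; first exact: mulr_ge0.
    by apply: le_trans (row_le i); exact: psumr_sub_le.
  rewrite [a i * _]mulr_sumr mulr_suml; apply: ler_sum => j _.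
  by apply: ler_wpM2l; [exact: mulr_ge0 | exact: e_le].
rewrite (bigID (mem SA)) /=; apply: le_trans (lerD inSA notinSA) _.
by rewrite le_eqVlt; apply/predU1P; left; ring.
Qed.

End WeightedSums.

Lemma char_poly_conj (R : comNzRingType) n (Q' Q D : 'M[R]_n) :
  Q' *m Q = 1%:M -> char_poly (Q' *m D *m Q) = char_poly D.
Proof.
move=> hQ; rewrite /char_poly.
have -> : char_poly_mx (Q' *m D *m Q) =
    map_mx polyC Q' *m char_poly_mx D *m map_mx polyC Q.
  rewrite /char_poly_mx mulmxBr mulmxBl !map_mxM; congr (_ - _).
  by rewrite mul_mx_scalar -scalemxAl -map_mxM hQ map_mx1 scalemx1.
by rewrite !det_mulmx mulrAC -det_mulmx -map_mxM hQ map_mx1 det1 mul1r.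
Qed.

Section Sesquilinear.
Variable C : numClosedFieldType.

Lemma ct_mulmx m n p (X : 'M[C]_(m, n)) (Y : 'M[C]_(n, p)) :
  ct (X *m Y) = ct Y *m ct X.
Proof. by rewrite map_mxM trmx_mul. Qed.

Variable n : nat.
Implicit Types (v w : 'cV[C]_n) (M P Q U X Y : 'M[C]_n) (d : 'rV[C]_n).

Definition qform M v := ((ct v) *m M *m v) 0 0.

Definition cnorm2 v := \sum_q v q 0 * (v q 0)^*.

Lemma qformE M v : qform M v = \sum_p \sum_q (v p 0)^* * M p q * v q 0.
Proof.
rewrite /qform mxE exchange_big; apply: eq_bigr => q _.
by rewrite mxE mulr_suml; apply: eq_bigr => p _; rewrite !mxE.
Qed.

Lemma qform_conj U M v : qform (ct U *m M *m U) v = qform M (U *m v).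
Proof. by rewrite /qform ct_mulmx !mulmxA. Qed.

Lemma qform_diag d w : qform (diag_mx d) w = \sum_l (w l 0)^* * d 0 l * w l 0.
Proof.
rewrite qformE; apply: eq_bigr => l _.
rewrite (bigD1 l) //= big1 ?addr0; first by rewrite mxE eqxx mulr1n.
by move=> q /negbTE nq; rewrite mxE eq_sym nq mulr0n mulr0 mul0r.
Qed.

Lemma cnorm2E v : ((ct v) *m v) 0 0 = cnorm2 v.
Proof. by rewrite mxE; apply: eq_bigr => l _; rewrite !mxE mulrC. Qed.

Lemma cnorm2_ge0 v : 0 <= cnorm2 v.
Proof. by apply: sumr_ge0 => q _; apply: mul_conjC_ge0. Qed.

Lemma cnorm2_gt0 v : v != 0 -> 0 < cnorm2 v.
Proof.
move=> vnz; rewrite lt_def cnorm2_ge0 andbT; apply: contra vnz => /eqP v0.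
apply/eqP/matrixP => q j; rewrite (ord1 j) mxE; apply/eqP; rewrite -mul_conjC_eq0.
by apply/eqP; apply: (psumr_eq0P (fun q _ => mul_conjC_ge0 (v q 0)) v0).
Qed.

Lemma cnorm2_unitary X v : ct X *m X = 1%:M -> cnorm2 (X *m v) = cnorm2 v.
Proof. by move=> hX; rewrite -!cnorm2E ct_mulmx -mulmxA (mulmxA (ct X)) hX mul1mx. Qed.

Lemma bessel_ineq X Y i v : ct X *m X = 1%:M -> Y *m ct Y = 1%:M ->
  \sum_j (\sum_q X j q * Y i q * v q 0) * (\sum_q X j q * Y i q * v q 0)^*
  <= cnorm2 v.
Proof.
move=> hX hY; pose w : 'cV[C]_n := \col_q (Y i q * v q 0).
have -> : \sum_j (\sum_q X j q * Y i q * v q 0) * (\sum_q X j q * Y i q * v q 0)^*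
    = cnorm2 (X *m w).
  apply: eq_bigr => j _; suff -> : \sum_q X j q * Y i q * v q 0 = (X *m w) j 0 by [].
  by rewrite mxE; apply: eq_bigr => q _; rewrite mxE mulrA.
rewrite cnorm2_unitary //; apply: ler_sum => q _; rewrite mxE rmorphM /=.
have Yrow : (Y i q) * (Y i q)^* <= 1.
  have -> : 1 = (Y *m ct Y) i i by rewrite hY mxE eqxx.
  rewrite mxE (bigD1 q) //= !mxE lerDl.
  by apply: sumr_ge0 => q' _; rewrite !mxE mul_conjC_ge0.
rewrite mulrACA -[X in _ <= X]mul1r ler_wpM2r //; exact: mul_conjC_ge0.
Qed.

Lemma qform_hadamard_spectral P Q (a b : 'rV[C]_n) v :
  qform (\matrix_(p, q) ((ct P *m diag_mx a *m P) p q * (ct Q *m diag_mx b *m Q) p q)) v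
  = \sum_i \sum_j a 0 i * b 0 j *
     ((\sum_q P i q * Q j q * v q 0) * (\sum_q P i q * Q j q * v q 0)^*).
Proof.
have entry R (r : 'rV[C]_n) p q : (ct R *m diag_mx r *m R) p q = \sum_i (R i p)^* * r 0 i * R i q.
  by rewrite mxE; apply: eq_bigr => i _; rewrite mul_mx_diag !mxE.
have swap3 (F : 'I_n -> 'I_n -> 'I_n -> C) :
    \sum_p \sum_q \sum_i F p q i = \sum_i \sum_p \sum_q F p q i.
  by under eq_bigr => p _ do rewrite exchange_big; rewrite exchange_big.
pose T i j p q := (v p 0)^* * ((P i p)^* * a 0 i * P i q) * ((Q j p)^* * b 0 j * Q j q) * v q 0.
transitivity (\sum_p \sum_q \sum_i \sum_j T i j p q).
  rewrite qformE; apply: eq_bigr => p _; apply: eq_bigr => q _.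
  rewrite mxE !entry big_distrlr mulr_sumr mulr_suml; apply: eq_bigr => i _.
  by rewrite mulr_sumr mulr_suml; apply: eq_bigr => j _; rewrite /T !mulrA.
rewrite swap3; apply: eq_bigr => i _; rewrite swap3; apply: eq_bigr => j _.
rewrite rmorph_sum big_distrlr mulr_sumr exchange_big /=.
apply: eq_bigr => p _; rewrite mulr_sumr; apply: eq_bigr => q _.
rewrite /T !rmorphM /=; ring.
Qed.

Lemma hermitian_spectral X : ct X = X ->
  exists P d,
    [/\ ct P *m P = 1%:M, P *m ct P = 1%:M & X = ct P *m diag_mx d *m P].
Proof.
move=> hX.
have ctE (Y : 'M[C]_n) : ct Y = (Y ^t*)%sesqui by rewrite map_trmx.
have /orthomx_spectralP Xe : X \is normalmx by apply/normalmxP; rewrite -ctE hX.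
have hu := spectral_unitarymx X.
have h2 : spectralmx X *m ct (spectralmx X) = 1%:M by rewrite ctE; apply/unitarymxP.
exists (spectralmx X), (spectral_diag X); split => //; first exact: mulmx1C.
by rewrite {1}Xe invmx_unitary // ctE.
Qed.

Lemma spectral_diag_ge0 X P d :
  (forall v, 0 <= qform X v) -> P *m ct P = 1%:M -> X = ct P *m diag_mx d *m P ->
  forall l, 0 <= d 0 l.
Proof.
move=> hq hP hX l; have := hq (col l (ct P)).
rewrite hX qform_conj colE mulmxA hP mul1mx qform_diag (bigD1 l) //= big1 ?addr0.
  by rewrite !mxE !eqxx /= mulr1 conjC1 mul1r.
by move=> l' /negbTE hl; rewrite !mxE hl /= mulr0.
Qed.

Lemma qform_spectral_ge U (mu : 'rV[C]_n) (S : {set 'I_n}) mu0 v :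
  ct U *m U = 1%:M -> (forall l, l \in S -> mu0 <= mu 0 l) ->
  (forall l, l \notin S -> (U *m v) l 0 = 0) ->
  mu0 * cnorm2 v <= qform (ct U *m diag_mx mu *m U) v.
Proof.
move=> hU hmu hS; rewrite qform_conj qform_diag -(cnorm2_unitary v hU) mulr_sumr.
apply: ler_sum => l _; have [lS|lS] := boolP (l \in S); last first.
  by rewrite hS // !(mulr0, mul0r).
set w := (U *m v) l 0; have -> : w^* * mu 0 l * w = mu 0 l * (w * w^*) by ring.
by rewrite ler_wpM2r ?mul_conjC_ge0 ?hmu.
Qed.

Lemma hadamard_spectral_eig_bound P Q U (a b mu : 'rV[C]_n)
    (SA SB SM : {set 'I_n}) (LA LB mu0 : C) :
  ct P *m P = 1%:M -> P *m ct P = 1%:M -> ct Q *m Q = 1%:M -> Q *m ct Q = 1%:M ->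
  ct U *m U = 1%:M ->
  \matrix_(p, q) ((ct P *m diag_mx a *m P) p q * (ct Q *m diag_mx b *m Q) p q)
    = ct U *m diag_mx mu *m U ->
  (forall i, 0 <= a 0 i) -> (forall j, 0 <= b 0 j) ->
  (forall i, a 0 i <= LA) -> (forall j, b 0 j <= LB) -> 0 <= LA -> 0 <= LB ->
  (forall l, l \in SM -> mu0 <= mu 0 l) -> (#|SA| * #|SB| < #|SM|)%N ->
  mu0 <= LB * (\sum_(i | i \notin SA) a 0 i) + LA * (\sum_(j | j \notin SB) b 0 j)
         + (\sum_(i | i \notin SA) a 0 i) * (\sum_(j | j \notin SB) b 0 j).
Proof.
move=> hP1 hP2 hQ1 hQ2 hU hM ha hb hLA hLB LA0 LB0 hmu hcard.
pose f (x : ('I_n * 'I_n) + 'I_n) q :=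
  match x with inl (i, j) => P i q * Q j q | inr l => U l q end.
pose S := [set inl x | x in setX SA SB] :|: [set inr l | l in ~: SM].
have cardS : (#|S| < n)%N.
  apply: (leq_ltn_trans (leq_card_setU _ _)).
  apply: (@leq_ltn_trans (#|setX SA SB| + #|~: SM|)); first by rewrite leq_add ?leq_imset_card.
  rewrite cardsX; apply: (@leq_trans (#|SM| + #|~: SM|)); first by rewrite ltn_add2r.
  by rewrite cardsC card_ord.
have [v vnz vS] := exists_nonzero_orthogonal f cardS.
pose c i j := \sum_q P i q * Q j q * v q 0.
pose e i j := c i j * (c i j)^*.
have e_eq0 i j : i \in SA -> j \in SB -> e i j = 0.
  move=> iS jS; rewrite /e /c (vS (inl (i, j))) ?mul0r //.
  by apply/setUP; left; apply/imsetP; exists (i, j); rewrite ?inE ?iS.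
have Uv_eq0 l : l \notin SM -> (U *m v) l 0 = 0.
  move=> lS; rewrite mxE; apply: (vS (inr l)).
  by apply/setUP; right; apply/imsetP; exists l; rewrite ?inE.
have col_le j : \sum_i e i j <= cnorm2 v by apply: bessel_ineq.
have row_le i : \sum_j e i j <= cnorm2 v.
  rewrite /e /c; under eq_bigr do under eq_bigr do rewrite (mulrC (P i _)).
  exact: bessel_ineq.
have := qform_spectral_ge hU hmu Uv_eq0.
rewrite -hM qform_hadamard_spectral => low.
have := le_trans low (weighted_sum_bound ha hb LA0 LB0 hLA hLB
  (fun i j => mul_conjC_ge0 (c i j)) e_eq0 col_le row_le).
by rewrite ler_pM2r // cnorm2_gt0.
Qed.

End Sesquilinear.

(* When [s] lists the diagonal entries in decreasing order, [top_idx s m] indexes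
   the [m] largest ones. *)
Definition top_idx n (s : 'S_n) m : {set 'I_n} := [set i | ((s^-1)%g i < m)%N].

Lemma card_top_idx n (s : 'S_n) m : (m <= n)%N -> #|top_idx s m| = m.
Proof.
move=> hm.
have -> : top_idx s m = (s^-1)%g @^-1: [set j : 'I_n | (j < m)%N].
  by apply/setP => i; rewrite !inE.
rewrite card_preimset; last exact: perm_inj.
have -> : [set j : 'I_n | (j < m)%N] = [set widen_ord hm j | j in 'I_m].
  apply/setP => j; rewrite inE; apply/idP/imsetP => [lt_m | [x _ ->]]; last by rewrite /= ltn_ord.
  by exists (Ordinal lt_m) => //; apply: val_inj.
by rewrite card_imset ?card_ord // => x y /(congr1 val) /= xy; apply: val_inj.
Qed.

Section Eigenvalues.
Variable R : realType.
Local Notation C := R[i].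
Variable n : nat.
Implicit Types (X P : 'M[C]_n) (d : 'rV[C]_n).

Lemma lambda_diag_conj X P d :
  ct P *m P = 1%:M -> X = ct P *m diag_mx d *m P ->
  exists s : 'S_n, (forall j : 'I_n, lambda X j.+1 = complex.Re (d 0 (s j))) /\
    (forall j j' : 'I_n, (j <= j')%N -> lambda X j'.+1 <= lambda X j.+1).
Proof.
move=> hP hX.
have hcp : char_poly X = \prod_(z <- [seq d 0 i | i <- enum 'I_n]) ('X - z%:P).
  rewrite hX char_poly_conj // char_poly_trig ?diag_mx_is_trig //.
  by rewrite big_map big_enum /=; apply: eq_bigr => i _; rewrite mxE eqxx.
have hpe : perm_eq (eigs X) [seq d 0 i | i <- enum 'I_n].
  apply: prod_XsubC_eq; rewrite -hcp /eigs; case: closed_field_poly_normal => s /= ->.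
  by rewrite (monicP (char_poly_monic X)) scale1r.
pose t := [tuple complex.Re (d 0 i) | i < n].
have hpt : perm_eq (eigs_desc X) t.
  rewrite /eigs_desc perm_sort; apply: (perm_trans (perm_map (@complex.Re R) hpe)).
  by rewrite -map_comp.
have [s hs] := tuple_permP hpt.
have hsz : size (eigs_desc X) = n by rewrite (perm_size hpt) size_tuple.
exists s; split => [j | j j' jj'].
  by rewrite /lambda /= hs nth_mktuple tnth_mktuple.
have srt : sorted (fun x y : R => y <= x) (eigs_desc X).
  by apply: sort_sorted => x y; exact: le_total.
have ge_trans : transitive (fun x y : R => y <= x).
  by move=> x y z /= h1 h2; exact: le_trans h2 h1.
by apply: (sorted_leq_nth ge_trans lexx 0 srt); rewrite ?inE /= ?hsz.
Qed.

Lemma psd_spectral X : psd X ->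
  exists P d (s : 'S_n),
    [/\ ct P *m P = 1%:M, P *m ct P = 1%:M, X = ct P *m diag_mx d *m P,
        forall l, 0 <= d 0 l
      & forall j j' : 'I_n, (j <= j')%N -> d 0 (s j') <= d 0 (s j)]
    /\ forall j : 'I_n, (lambda X j.+1)%:C%C = d 0 (s j).
Proof.
move=> [hX hq]; have [P [d [hP1 hP2 hXe]]] := hermitian_spectral hX.
have d_ge0 := spectral_diag_ge0 hq hP2 hXe.
have [s [lamE lam_anti]] := lambda_diag_conj hP1 hXe.
have lamC (j : 'I_n) : (lambda X j.+1)%:C%C = d 0 (s j).
  by rewrite lamE RRe_real // ger0_real.
exists P, d, s; split => //; split => // j j' jj'.
by rewrite -!lamC lecR lam_anti.
Qed.

Lemma psd_hadamard (A B : 'M[C]_n) : psd A -> psd B -> psd (hadamard A B).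
Proof.
move=> psdA psdB; have [P [a [s [[_ hP2 hAe ha _] _]]]] := psd_spectral psdA.
have [Q [b [t [[_ hQ2 hBe hb _] _]]]] := psd_spectral psdB.
case: psdA psdB => [hA _] [hB _]; split.
  by apply/matrixP => i j; rewrite -[in RHS]hA -[in RHS]hB !mxE rmorphM.
move=> v; change (0 <= qform (hadamard A B) v).
rewrite /hadamard hAe hBe qform_hadamard_spectral.
apply: sumr_ge0 => i _; apply: sumr_ge0 => j _.
by apply: mulr_ge0; [exact: mulr_ge0 | exact: mul_conjC_ge0].
Qed.

Lemma trace_gt_spectral X d (s : 'S_n) k :
  (forall j : 'I_n, (lambda X j.+1)%:C%C = d 0 (s j)) ->
  (trace_gt X k)%:C%C = \sum_(i | i \notin top_idx s k) d 0 i.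
Proof.
move=> lamE; rewrite /trace_gt big_add1 /= big_geq_mkord /= rmorph_sum.
rewrite [RHS](reindex_inj (@perm_inj _ s)) /=.
by apply: eq_big => [j|j _]; rewrite ?inE ?permK -?leqNgt ?lamE.
Qed.

End Eigenvalues.

Unset Implicit Arguments.

Theorem mainTheorem7 (R : realType) (n : nat) (A B : 'M[R[i]]_n)
    (k h : nat) :
  psd A -> psd B -> (1 <= k)%N -> (1 <= h)%N -> (k * h + 1 <= n)%N ->
  lambda (hadamard A B) (k * h + 1) <=
    lambda B 1 * trace_gt A k + lambda A 1 * trace_gt B h
    + trace_gt A k * trace_gt B h.
Proof.
move=> psdA psdB k_ge1 h_ge1 khn.
have [P [a [sA [[hP1 hP2 hAe a_ge0 decA] lamA]]]] := psd_spectral psdA.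
have [Q [b [sB [[hQ1 hQ2 hBe b_ge0 decB] lamB]]]] := psd_spectral psdB.
have [U [mu [sM [[hU _ hMe _ decM] lamM]]]] := psd_spectral (psd_hadamard psdA psdB).
have n_gt0 : (0 < n)%N by nia.
have kh_lt : (k * h < n)%N by nia.
pose i0 := Ordinal n_gt0; pose ikh := Ordinal kh_lt.
have a_le l : a 0 l <= a 0 (sA i0) by rewrite -{1}(permKV sA l) decA.
have b_le l : b 0 l <= b 0 (sB i0) by rewrite -{1}(permKV sB l) decB.
have mu_ge l : l \in top_idx sM (k * h + 1) -> mu 0 (sM ikh) <= mu 0 l.
  by rewrite inE addn1 ltnS => hl; rewrite -(permKV sM l) decM.
have card_lt : (#|top_idx sA k| * #|top_idx sB h| < #|top_idx sM (k * h + 1)|)%N.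
  by rewrite !card_top_idx; nia.
have hM : \matrix_(p, q) ((ct P *m diag_mx a *m P) p q * (ct Q *m diag_mx b *m Q) p q)
    = ct U *m diag_mx mu *m U by rewrite -hMe -hAe -hBe.
have := hadamard_spectral_eig_bound hP1 hP2 hQ1 hQ2 hU hM a_ge0 b_ge0 a_le b_le
  (a_ge0 _) (b_ge0 _) mu_ge card_lt.
rewrite -lecR !rmorphD !rmorphM /= (trace_gt_spectral _ lamA) (trace_gt_spectral _ lamB).
by rewrite (lamA i0) (lamB i0) addn1 (lamM ikh).
Qed.
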